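(* Consider $n$ agents in the plane evolving according to the piecewise continuous-time dynamics described in the context, with blind-zone radius $\delta>0$. Let $i\neq j$ be two agents and let $t$ be a time with $d_{ij}(t)=\|p_i(t)-p_j(t)\|>\delta$ (the agents are ''separated''). Then the distance between them does not increase at $t$: $\frac{d}{dt}d_{ij}(t)\le 0$.
   Context: Agents $1,\dots,n$ have positions $p_i(t)\in\mathbb{R}^2$. Fix $\delta>0$. For each integer $k\ge 0$ and each agent $i$, let $\chi^{(i)}_k$ be independent random variables, uniformly distributed on $[0,2\pi)$, and set the heading $\theta_i(t)=\chi^{(i)}_k$ for $t\in[k,k+1)$, with unit heading vector $\hat\theta_i(t)=(\cos\theta_i(t),\sin\theta_i(t))^\top$. The motion law is $\dot p_i(t)=\hat\theta_i(t)\,s_i(t)$, where $s_i(t)=0$ if there exists an agent $j$ with $d_{ij}(t)>\delta$ and $\hat\theta_i(t)^\top\big(p_j(t)-p_i(t)\big)\le 0$, and $s_i(t)=1$ otherwise. Here $d_{ij}(t)=\|p_i(t)-p_j(t)\|$. (That is, each agent moves forward with unit speed when its closed back half-plane, excluding a blind-zone half-disc of radius $\delta$, contains no other agent, and otherwise stays put.) The initial configuration $p_1(0),\dots,p_n(0)$ is arbitrary. *)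

From Stdlib Require Import Reals Lra ClassicalEpsilon.
From Coquelicot Require Import Coquelicot.
Open Scope R_scope.

Definition pt := (R * R)%type.

Definition edist (a b : pt) : R :=
  sqrt ((fst a - fst b) ^ 2 + (snd a - snd b) ^ 2).

(* Heading of agent i at time t >= 0: theta_i(t) = chi i k for t in [k, k+1).
   [chi i k] is one realization of the random variables chi^(i)_k. *)
Definition heading (chi : nat -> nat -> R) (i : nat) (t : R) : R :=
  chi i (Z.to_nat (Int_part t)).

Definition heading_dot (chi : nat -> nat -> R) (i : nat) (t : R) (pi q : pt) : R :=
  cos (heading chi i t) * (fst q - fst pi) + sin (heading chi i t) * (snd q - snd pi).

Definition blocked (n : nat) (delta : R) (chi : nat -> nat -> R)
    (p : nat -> R -> pt) (i : nat) (t : R) : Prop :=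
  exists j, (j < n)%nat /\ edist (p i t) (p j t) > delta /\
            heading_dot chi i t (p i t) (p j t) <= 0.

Definition speed (n : nat) (delta : R) (chi : nat -> nat -> R)
    (p : nat -> R -> pt) (i : nat) (t : R) : R :=
  if excluded_middle_informative (blocked n delta chi p i t) then 0 else 1.

Definition has_rderiv (f : R -> R) (t l : R) : Prop :=
  filterlim (fun h => (f (t + h) - f t) / h) (at_right 0) (locally l).

(* The motion law dp_k/dt = hat(theta_k)(t) s_k(t), understood with right
   derivatives (headings are constant on [k, k+1)), at time tau. *)
Definition motion_law (n : nat) (delta : R) (chi : nat -> nat -> R)
    (p : nat -> R -> pt) (k : nat) (tau : R) : Prop :=
  has_rderiv (fun u => fst (p k u)) tau
     (cos (heading chi k tau) * speed n delta chi p k tau) /\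
  has_rderiv (fun u => snd (p k u)) tau
     (sin (heading chi k tau) * speed n delta chi p k tau).

(** Along the motion law, [d/dt d_ij = <p_i - p_j, v_i - v_j> / d_ij] with
    [v_k = s_k theta_k], which rearranges to
    [-(s_i theta_i.(p_j - p_i) + s_j theta_j.(p_i - p_j)) / d_ij].
    Each of the two products is nonnegative: when [d_ij > delta], a moving agent
    ([s = 1]) is not blocked, so the other agent lies strictly in front of it. *)

From Stdlib Require Import Reals Lra ClassicalEpsilon.
From Coquelicot Require Import Coquelicot.
Open Scope R_scope.

Section FilterlimArith.

Context {T : Type} {F : (T -> Prop) -> Prop} {FF : Filter F}.

Lemma filterlim_Rplus_fun (f g : T -> R) (a b : R) :
  filterlim f F (locally a) -> filterlim g F (locally b) ->
  filterlim (fun x => f x + g x) F (locally (a + b)).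
Proof. intros Hf Hg. exact (filterlim_comp_2 f g Rplus Hf Hg (filterlim_plus a b)). Qed.

Lemma filterlim_Rmult_fun (f g : T -> R) (a b : R) :
  filterlim f F (locally a) -> filterlim g F (locally b) ->
  filterlim (fun x => f x * g x) F (locally (a * b)).
Proof. intros Hf Hg. exact (filterlim_comp_2 f g Rmult Hf Hg (filterlim_mult a b)). Qed.

Lemma filterlim_Ropp_fun (f : T -> R) (a : R) :
  filterlim f F (locally a) -> filterlim (fun x => - f x) F (locally (- a)).
Proof. intros Hf. exact (filterlim_comp _ _ _ f Ropp _ _ _ Hf (filterlim_opp a)). Qed.

End FilterlimArith.

Lemma filterlim_at_right_0_ext (f g : R -> R) (l : R) :
  (forall h, h <> 0 -> f h = g h) ->
  filterlim f (at_right 0) (locally l) -> filterlim g (at_right 0) (locally l).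
Proof.
  intros Hfg. apply filterlim_ext_loc.
  exists (mkposreal 1 Rlt_0_1). intros h _ Hh. apply Hfg. lra.
Qed.

Lemma has_rderiv_cont_right (f : R -> R) (t l : R) :
  has_rderiv f t l -> filterlim (fun h => f (t + h)) (at_right 0) (locally (f t)).
Proof.
  intros Hf.
  assert (Hid : filterlim (fun h => h) (at_right 0) (locally 0)).
  { apply (filterlim_filter_le_1 _ (filter_le_within _)). apply filterlim_id. }
  assert (K := filterlim_Rplus_fun _ _ _ _ (filterlim_const (F := at_right 0) (f t))
                 (filterlim_Rmult_fun _ _ _ _ Hid Hf)).
  rewrite Rmult_0_l, Rplus_0_r in K.
  refine (filterlim_at_right_0_ext _ _ _ _ K).
  intros h Hh. field. exact Hh.
Qed.

Lemma has_rderiv_plus (f g : R -> R) (t a b : R) :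
  has_rderiv f t a -> has_rderiv g t b -> has_rderiv (fun u => f u + g u) t (a + b).
Proof.
  intros Hf Hg.
  refine (filterlim_at_right_0_ext _ _ _ _ (filterlim_Rplus_fun _ _ _ _ Hf Hg)).
  intros h Hh. field. exact Hh.
Qed.

Lemma has_rderiv_minus (f g : R -> R) (t a b : R) :
  has_rderiv f t a -> has_rderiv g t b -> has_rderiv (fun u => f u - g u) t (a - b).
Proof.
  intros Hf Hg.
  refine (filterlim_at_right_0_ext _ _ _ _
            (filterlim_Rplus_fun _ _ _ _ Hf (filterlim_Ropp_fun _ _ Hg))).
  intros h Hh. field. exact Hh.
Qed.

Lemma derivable_pt_lim_slope_cont (g : R -> R) (y0 l : R) :
  derivable_pt_lim g y0 l ->
  filterlim (fun y => if Req_EM_T y y0 then l else (g y - g y0) / (y - y0))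
    (locally y0) (locally l).
Proof.
  intros Hg. apply filterlim_locally. intros eps.
  destruct (Hg eps (cond_pos eps)) as [del Hdel].
  exists del. intros y Hy.
  change (Rabs ((if Req_EM_T y y0 then l else (g y - g y0) / (y - y0)) - l) < eps).
  destruct (Req_EM_T y y0) as [E | NE].
  - rewrite Rminus_diag, Rabs_R0. apply cond_pos.
  - assert (Hh : y - y0 <> 0) by lra.
    assert (Hy' : Rabs (y - y0) < del) by exact Hy.
    specialize (Hdel (y - y0) Hh Hy').
    rewrite Rplus_minus in Hdel. exact Hdel.
Qed.

(* Caratheodory's form of the chain rule: [g y - g (f t) = slope y * (y - f t)] for every [y]. *)
Lemma has_rderiv_comp (g f : R -> R) (t a l : R) :
  derivable_pt_lim g (f t) l -> has_rderiv f t a ->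
  has_rderiv (fun u => g (f u)) t (l * a).
Proof.
  intros Hg Hf.
  set (slope := fun y => if Req_EM_T y (f t) then l else (g y - g (f t)) / (y - f t)).
  assert (Hslope : filterlim (fun h => slope (f (t + h))) (at_right 0) (locally l)).
  { exact (filterlim_comp _ _ _ _ _ _ _ _ (has_rderiv_cont_right f t a Hf)
             (derivable_pt_lim_slope_cont g (f t) l Hg)). }
  refine (filterlim_at_right_0_ext _ _ _ _ (filterlim_Rmult_fun _ _ _ _ Hslope Hf)).
  intros h Hh. unfold slope.
  destruct (Req_EM_T (f (t + h)) (f t)) as [E | NE].
  - rewrite E. field. exact Hh.
  - field. split; [exact Hh | lra].
Qed.

Lemma has_rderiv_sq (f : R -> R) (t a : R) :
  has_rderiv f t a -> has_rderiv (fun u => f u ^ 2) t (2 * f t * a).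
Proof.
  intros Hf.
  replace (2 * f t * a) with ((INR 2 * f t ^ Init.Nat.pred 2) * a) by (simpl; ring).
  exact (has_rderiv_comp (fun y => y ^ 2) f t a _ (derivable_pt_lim_pow (f t) 2) Hf).
Qed.

Lemma has_rderiv_edist (a b : R -> pt) (t vax vay vbx vby : R) :
  0 < edist (a t) (b t) ->
  has_rderiv (fun u => fst (a u)) t vax -> has_rderiv (fun u => snd (a u)) t vay ->
  has_rderiv (fun u => fst (b u)) t vbx -> has_rderiv (fun u => snd (b u)) t vby ->
  has_rderiv (fun u => edist (a u) (b u)) t
    (((fst (a t) - fst (b t)) * (vax - vbx) + (snd (a t) - snd (b t)) * (vay - vby))
       / edist (a t) (b t)).
Proof.
  intros Hpos Hax Hay Hbx Hby.
  set (d2 := fun u => (fst (a u) - fst (b u)) ^ 2 + (snd (a u) - snd (b u)) ^ 2).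
  assert (Hd2 : 0 < d2 t).
  { destruct (Rle_lt_dec (d2 t) 0) as [Hle | Hlt]; [|exact Hlt].
    unfold edist in Hpos. fold (d2 t) in Hpos. rewrite (sqrt_neg_0 _ Hle) in Hpos. lra. }
  assert (Dd2 := has_rderiv_plus _ _ _ _ _
                   (has_rderiv_sq _ _ _ (has_rderiv_minus _ _ _ _ _ Hax Hbx))
                   (has_rderiv_sq _ _ _ (has_rderiv_minus _ _ _ _ _ Hay Hby))).
  assert (D := has_rderiv_comp sqrt d2 t _ _ (derivable_pt_lim_sqrt _ Hd2) Dd2).
  unfold edist in Hpos |- *. fold (d2 t) in Hpos |- *.
  replace (((fst (a t) - fst (b t)) * (vax - vbx) + (snd (a t) - snd (b t)) * (vay - vby))
             / sqrt (d2 t))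
    with (/ (2 * sqrt (d2 t)) *
          (2 * (fst (a t) - fst (b t)) * (vax - vbx) + 2 * (snd (a t) - snd (b t)) * (vay - vby)))
    by (field; lra).
  exact D.
Qed.

Lemma edist_comm (a b : pt) : edist a b = edist b a.
Proof. unfold edist. f_equal. ring. Qed.

Lemma speed_mul_heading_dot_ge0 n delta chi (p : nat -> R -> pt) i j t :
  (j < n)%nat -> edist (p i t) (p j t) > delta ->
  0 <= speed n delta chi p i t * heading_dot chi i t (p i t) (p j t).
Proof.
  intros Hj Hd. unfold speed.
  destruct (excluded_middle_informative (blocked n delta chi p i t)) as [_ | Hfree].
  - lra.
  - destruct (Rle_lt_dec (heading_dot chi i t (p i t) (p j t)) 0) as [Hle | Hlt].
    + exfalso. apply Hfree. exists j. auto.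
    + lra.
Qed.

Theorem lemma1 (n : nat) (delta : R) (chi : nat -> nat -> R)
    (p : nat -> R -> pt) (i j : nat) (t : R) :
  0 < delta ->
  (forall k m, 0 <= chi k m < 2 * PI) ->
  (forall k tau, (k < n)%nat -> 0 <= tau -> motion_law n delta chi p k tau) ->
  (i < n)%nat -> (j < n)%nat -> i <> j ->
  0 <= t ->
  edist (p i t) (p j t) > delta ->
  exists l, has_rderiv (fun u => edist (p i u) (p j u)) t l /\ l <= 0.
Proof.
  intros Hdelta _ Hmotion Hi Hj _ Ht Hsep.
  destruct (Hmotion i t Hi Ht) as [Hxi Hyi].
  destruct (Hmotion j t Hj Ht) as [Hxj Hyj].
  assert (Hpos : 0 < edist (p i t) (p j t)) by lra.
  eexists. split; [exact (has_rderiv_edist _ _ _ _ _ _ _ Hpos Hxi Hyi Hxj Hyj)|].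
  assert (Hfront_i := speed_mul_heading_dot_ge0 n delta chi p i j t Hj Hsep).
  rewrite edist_comm in Hsep.
  assert (Hfront_j := speed_mul_heading_dot_ge0 n delta chi p j i t Hi Hsep).
  unfold heading_dot in Hfront_i, Hfront_j.
  unfold Rdiv. apply Rmult_le_0_r; [nra | left; apply Rinv_0_lt_compat, Hpos].
Qed.
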